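(* A tubal matrix $\mathcal A\in\mathbb{C}_p^{I\times I}$ is unitary if and only if its small-t transpose $\mathcal A^t$ is unitary.
   Context: Fix an integer $p\ge1$ and an invertible linear map $L:\mathbb{C}^p\to\mathbb{C}^p$. A tubal scalar is an element of $\mathbb{C}_p:=\mathbb{C}^p$. The tensor-tensor product of tubal scalars is $\mathbf a*\mathbf b=L^{-1}(L(\mathbf a)\odot L(\mathbf b))$, where $\odot$ is the componentwise product. A tubal matrix $\mathcal A\in\mathbb{C}_p^{I\times J}$ is an $I\times J$ array of tubal scalars (identified with an array in $\mathbb{C}^{I\times J\times p}$); its $k$-th frontal slice $\mathcal A^{(k)}\in\mathbb{C}^{I\times J}$ has entries $\mathcal A(i,j)^{(k)}$, and $L(\mathcal A)$ is obtained by applying $L$ to every entry. For $\mathcal A\in\mathbb{C}_p^{I\times J}$, $\mathcal B\in\mathbb{C}_p^{J\times K}$, the product $\mathcal A*\mathcal B\in\mathbb{C}_p^{I\times K}$ is defined by $(\mathcal A*\mathcal B)(i,k)=\sum_j\mathcal A(i,j)*\mathcal B(j,k)$; equivalently $L(\mathcal A*\mathcal B)^{(k)}=L(\mathcal A)^{(k)}L(\mathcal B)^{(k)}$ for all $k$. The identity $\mathcal I_I\in\mathbb{C}_p^{I\times I}$ is the tubal matrix with $L(\mathcal I_I)^{(k)}$ equal to the $I\times I$ identity matrix for every $k$. The Hermitian transpose $\mathcal A^H\in\mathbb{C}_p^{J\times I}$ is defined by $L(\mathcal A^H)^{(k)}=(L(\mathcal A)^{(k)})^H$ for all $k$. $\mathcal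 A\in\mathbb{C}_p^{I\times I}$ is unitary if $\mathcal A*\mathcal A^H=\mathcal A^H*\mathcal A=\mathcal I_I$. The small-t transpose $\mathcal A^t\in\mathbb{C}_p^{J\times I}$ is defined by $\mathcal A^t(j,i)=\mathcal A(i,j)$ (each frontal slice is transposed, without conjugation). *)

From mathcomp Require Import all_boot all_algebra complex reals.
Set Implicit Arguments. Unset Strict Implicit. Unset Printing Implicit Defensive.
Import GRing.Theory Num.Theory.
Local Open Scope ring_scope.

Section Tubal.
Variables (R : realType) (p : nat) (L : 'M[R[i]]_p).

Definition tube := 'cV[R[i]]_p.
Definition tmat (I J : nat) := 'M[tube]_(I, J).

Definition Lt (a : tube) : tube := L *m a.
Definition Linvt (a : tube) : tube := invmx L *m a.

Definition tprod (a b : tube) : tube :=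
  Linvt (\col_k ((Lt a) k 0 * (Lt b) k 0)).

Definition tmul I J K (A : tmat I J) (B : tmat J K) : tmat I K :=
  \matrix_(i, k) \sum_(j < J) tprod (A i j) (B j k).

(* identity: L(I)^{(k)} is the identity matrix for every k *)
Definition tid I : tmat I I :=
  \matrix_(i, j) Linvt (\col_(k < p) (i == j)%:R).

(* Hermitian transpose: L(A^H)^{(k)} = (L(A)^{(k)})^H *)
Definition tH I J (A : tmat I J) : tmat J I :=
  \matrix_(j, i) Linvt (map_mx Num.conj (Lt (A i j))).

Definition tunitary I (A : tmat I I) : Prop :=
  tmul A (tH A) = tid I /\ tmul (tH A) A = tid I.

Definition tT I J (A : tmat I J) : tmat J I := \matrix_(j, i) A i j.

End Tubal.

(* Applying L entrywise turns a tubal matrix into p ordinary complex matrices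
   (its frontal slices), and the t-product, the identity and the Hermitian
   transpose all act slice by slice.  So A is unitary iff every slice of L(A)
   is a unitary matrix.  The small-t transpose commutes with L, hence
   transposes every slice, and an ordinary square matrix is unitary iff its
   transpose is. *)
From mathcomp Require Import all_boot all_algebra complex reals.
Set Implicit Arguments. Unset Strict Implicit. Unset Printing Implicit Defensive.
Import GRing.Theory Num.Theory.
Local Open Scope ring_scope.
Local Open Scope sesquilinear_scope.

Section FrontalSlices.
Variables (R : realType) (p : nat) (L : 'M[R[i]]_p).

Definition tslice (k : 'I_p) I J (A : tmat R p I J) : 'M[R[i]]_(I, J) :=
  \matrix_(i, j) Lt L (A i j) k 0.

Lemma tslice_tT k I J (A : tmat R p I J) : tslice k (tT A) = (tslice k A)^T.
Proof. by apply/matrixP => i j; rewrite !mxE. Qed.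

Hypothesis L_unit : L \in unitmx.

Lemma LtK (v : tube R p) : Lt L (Linvt L v) = v.
Proof. by rewrite /Lt /Linvt mulmxA mulmxV // mul1mx. Qed.

Lemma Lt_inj : injective (Lt L).
Proof.
move=> a b /(congr1 (mulmx (invmx L))).
by rewrite /Lt !mulmxA mulVmx // !mul1mx.
Qed.

Lemma tslice_inj I J (A B : tmat R p I J) :
  (forall k, tslice k A = tslice k B) -> A = B.
Proof.
move=> eqAB; apply/matrixP => i j; apply: Lt_inj; apply/matrixP => k l.
by rewrite ord1; have /matrixP/(_ i j) := eqAB k; rewrite !mxE.
Qed.

Lemma tslice_tmul k I J K (A : tmat R p I J) (B : tmat R p J K) :
  tslice k (tmul L A B) = tslice k A *m tslice k B.
Proof.
apply/matrixP => i l; rewrite mxE [X in Lt L X]mxE /Lt mulmx_sumr summxE mxE.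
by apply: eq_bigr => j _; rewrite -[L *m _]/(Lt L _) /tprod LtK !mxE.
Qed.

Lemma tslice_tid k I : tslice k (tid L I) = 1%:M.
Proof. by apply/matrixP => i j; rewrite mxE [X in Lt L X]mxE LtK !mxE. Qed.

Lemma tslice_tH k I J (A : tmat R p I J) : tslice k (tH L A) = (tslice k A)^t*.
Proof. by apply/matrixP => j i; rewrite mxE [X in Lt L X]mxE LtK !mxE. Qed.

Lemma tunitaryE I (A : tmat R p I I) :
  tunitary L A <-> forall k, tslice k A \is unitarymx.
Proof.
split=> [[AAH _] k | Aunitary].
  by apply/unitarymxP; rewrite -tslice_tH -tslice_tmul AAH tslice_tid.
by split; apply: tslice_inj => k; rewrite tslice_tmul tslice_tH tslice_tid;
  [|apply: mulmx1C]; apply/unitarymxP.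
Qed.

End FrontalSlices.

Theorem proposition3p3 (R : realType) (p : nat) (L : 'M[R[i]]_p) (I : nat)
    (A : tmat R p I I) :
  (0 < p)%N -> L \in unitmx ->
  (tunitary L A <-> tunitary L (tT A)).
Proof.
move=> _ L_unit; rewrite !(tunitaryE L_unit).
by split=> unitary_slices k; have := unitary_slices k;
  rewrite tslice_tT trmx_unitary.
Qed.
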